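(* Let $\alpha<0<\beta$ and $\theta^*=\beta/(\beta-\alpha)\in(0,1)$. Then for every $\theta\in[0,1]$ with $\theta\neq\theta^*$, $E_{\theta^*}\succ E_\theta$; that is, with $\theta_1=\theta$ and $\theta_2=\theta^*$, for every $p^0\in L^1([0,1])$ with $p^0\ge0$ and $\int_0^1p^0\,dx=1$, \[ \pi_1[p^0]<\int_0^1x\,p^0(x)\,dx . \]
   Context: An $E_\theta$-strategist ($\theta\in[0,1]$) plays pure strategy I with probability $\theta$ and pure strategy II with probability $1-\theta$ in a two-strategy game (Moran process) between $E_{\theta_1}$ and $E_{\theta_2}$ strategists, with payoffs scaled as $(A,B,C,D)=(1,1,1,1)+\frac1N(a,b,c,d)+o(1/N)$ and $\alpha=a-c$, $\beta=b-d$. In the associated large-population (thermodynamical) limit, with $x$ the fraction of $E_{\theta_1}$ strategists and $p^0$ the initial density of $x$, the fixation probability of the $E_{\theta_1}$ type is \[ \pi_1[p^0]=\frac{\int_0^1p^0(x)\int_0^xF_{(\theta_1,\theta_2)}(y)\,dy\,dx}{\int_0^1F_{(\theta_1,\theta_2)}(y)\,dy},\qquad F_{(\theta_1,\theta_2)}(y)=\exp\!\Big(-y^2(\theta_1-\theta_2)^2\tfrac{\alpha-\beta}{2}-y(\theta_1-\theta_2)\big(\theta_2\alpha+(1-\theta_2)\beta\big)\Big). \] In the neutral case $\theta_1=\theta_2$ this equals $\pi_1^{\rm N}[p^0]=\int_0^1xp^0(x)\,dx$. Definition: $E_{\theta_2}\succ E_{\theta_1}$ ($E_{\theta_2}$ dominates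 $E_{\theta_1}$) if for every nontrivial initial condition $p^0$ the fixation probability $\pi_1[p^0]$ of the $E_{\theta_1}$ type is strictly smaller than the neutral value $\int_0^1xp^0(x)\,dx$. *)

From HB Require Import structures.
From mathcomp Require Import all_boot all_order all_algebra.
From mathcomp Require Import all_classical all_reals all_analysis.
Set Implicit Arguments. Unset Strict Implicit. Unset Printing Implicit Defensive.
Import Order.TTheory GRing.Theory Num.Theory.
Import numFieldNormedType.Exports.
Local Open Scope classical_set_scope.
Local Open Scope ring_scope.

Definition Fth {R : realType} (alpha beta th1 th2 : R) (y : R) : R :=
  expR (- (y ^+ 2 * (th1 - th2) ^+ 2 * ((alpha - beta) / 2))
        - y * (th1 - th2) * (th2 * alpha + (1 - th2) * beta)).

Definition pi1 {R : realType} (alpha beta th1 th2 : R) (p0 : R -> R) : R :=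
  Rintegral lebesgue_measure `[0%R, 1%R]
     (fun x => p0 x * Rintegral lebesgue_measure `[0, x] (Fth alpha beta th1 th2))
  / Rintegral lebesgue_measure `[0%R, 1%R] (Fth alpha beta th1 th2).

Definition pi1_neutral {R : realType} (p0 : R -> R) : R :=
  Rintegral lebesgue_measure `[0%R, 1%R] (fun x => x * p0 x).

From HB Require Import structures.
From mathcomp Require Import all_boot all_order all_algebra.
From mathcomp Require Import all_classical all_reals all_analysis.
From mathcomp Require Import lra ring measurable_realfun.
Import Order.TTheory GRing.Theory Num.Theory.
Import numFieldNormedType.Exports.
Local Open Scope classical_set_scope.
Local Open Scope ring_scope.

(* At t = beta / (beta - alpha) the linear part of the exponent of F vanishes,
   so F y = exp (c y^2), where c = (beta - alpha) / 2 times the square of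
   theta - t, is positive and strictly increasing on [0, +oo) as soon as
   theta != t.  Its primitive G x = int_0^x F is then strictly convex, i.e.
   G x < x G 1 on (0, 1), and pi_1[p0] - int x p0 = int p0 (G x - x G 1) / G 1
   is negative because the density p0 has positive mass on (0, 1). *)

Section weighted_integral_positivity.
Context {R : realType}.
Notation mu := (@lebesgue_measure R).

Lemma bounded_in_le {D : set R} {k : R -> R} (M : R) :
  (forall x, D x -> `|k x| <= M) -> [bounded k x | x in D].
Proof.
move=> kM; rewrite /bounded_near; near=> N => x Dx /=; apply: le_trans (kM x Dx) _.
by near: N; apply: nbhs_pinfty_ge; exact: num_real.
Unshelve. all: end_near. Qed.

Lemma integrable_mul_bounded {D : set R} {p k : R -> R} : measurable D ->
  mu.-integrable D (EFin \o p) -> measurable_fun D k ->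
  [bounded k x | x in D] ->
  mu.-integrable D (EFin \o (fun x => p x * k x)).
Proof.
move=> mD ip mk bk.
have -> : EFin \o (fun x => p x * k x) = ((EFin \o p) \* (EFin \o k))%E.
  by apply: funext => x /=; rewrite EFinM.
exact: integrableMl.
Qed.

Lemma Rintegral_mul_gt0 (a b : R) (p w : R -> R) :
  mu.-integrable `[a, b] (EFin \o p) ->
  (forall x, x \in `[a, b] -> 0 <= p x) ->
  Rintegral mu `[a, b] p != 0 ->
  measurable_fun `[a, b] w -> [bounded w x | x in `[a, b]] ->
  (forall x, x \in `[a, b] -> 0 <= w x) ->
  (forall x, x \in `]a, b[ -> 0 < w x) ->
  0 < Rintegral mu `[a, b] (fun x => p x * w x).
Proof.
move=> ip p_ge0 p_neq0 mw bw w_ge0 w_gt0.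
have oo_cc : `]a, b[ `<=` `[a, b] by apply: subset_itvW.
have ipw := integrable_mul_bounded (measurable_itv `[a, b]) ip mw bw.
have pw_ge0 x : x \in `[a, b] -> 0 <= p x * w x.
  by move=> xab; rewrite mulr_ge0 ?p_ge0 ?w_ge0.
rewrite lt_def Rintegral_ge0 ?andbT => [|x]; last exact: pw_ge0.
apply: contra p_neq0 => /eqP pw0.
have mpw := measurable_int _ ipw.
have abs0 : (\int[mu]_(x in `[a, b]) `|(p x * w x)%:E| = 0)%E.
  rewrite -[RHS]/((0 : R)%:E) -pw0 /Rintegral fineK ?(integrable_fin_num _ ipw) //.
  by apply: eq_integral => x /set_mem /pw_ge0 pw; rewrite gee0_abs ?lee_fin.
have pw_ae0 := (ae_eq_integral_abs mu (measurable_itv _) mpw).1 abs0.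
have p_ae0 : ae_eq mu `]a, b[%classic (EFin \o p) (cst 0%E).
  apply: filterS pw_ae0 => x pwx0 xab; move: (pwx0 (oo_cc _ xab)) => /= [] /eqP.
  by rewrite mulf_eq0 (gt_eqF (w_gt0 x xab)) orbF => /eqP ->.
have mp : measurable_fun (`]a, b[%classic : set R) (EFin \o p).
  exact: measurable_funS (measurable_int _ ip).
by rewrite /Rintegral integral_itv_bndoo // (ae_eq_integral (cst 0%E)) ?integral0.
Qed.

End weighted_integral_positivity.

Section integral_bounds.
Context {R : realType}.
Notation mu := (@lebesgue_measure R).

Lemma lebesgue_measure_itv_le (a b : R) (s t : bool) : a <= b ->
  mu [set` Interval (BSide s a) (BSide t b)] = (b - a)%:E.
Proof.
rewrite lebesgue_measure_itv /= lte_fin le_eqVlt => /predU1P[->|ab].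
  by rewrite ltxx subrr.
by rewrite ab -EFinD.
Qed.

Lemma Rintegral_le_cst (D : set R) (f : R -> R) (c : R) : measurable D ->
  (mu D < +oo)%E -> mu.-integrable D (EFin \o f) ->
  (forall x, D x -> f x <= c) -> Rintegral mu D f <= c * fine (mu D).
Proof.
move=> mD Dfin iF fc; rewrite -Rintegral_cst //; apply: le_Rintegral => //.
apply/integrableP; split; first exact: measurable_cst.
by rewrite integral_cst // ltey_eq /= ?fin_numM // ge0_fin_numE.
Qed.

Lemma Rintegral_ge_cst (D : set R) (f : R -> R) (c : R) : measurable D ->
  (mu D < +oo)%E -> mu.-integrable D (EFin \o f) ->
  (forall x, D x -> c <= f x) -> c * fine (mu D) <= Rintegral mu D f.
Proof.
move=> mD Dfin iF fc; rewrite -Rintegral_cst //; apply: le_Rintegral => //.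
apply/integrableP; split; first exact: measurable_cst.
by rewrite integral_cst // ltey_eq /= ?fin_numM // ge0_fin_numE.
Qed.
End integral_bounds.

Definition cumint {R : realType} (F : R -> R) (x : R) : R :=
  Rintegral lebesgue_measure `[0, x] F.

Lemma cumint0 {R : realType} (F : R -> R) : cumint F 0 = 0.
Proof. by rewrite /cumint set_itv1 Rintegral_set1. Qed.

Section cumint_increasing.
Context {R : realType} (F : R -> R).
Hypothesis F_cont : continuous F.
Hypothesis F_gt0 : forall y, 0 < F y.
Hypothesis F_incr : {in `[0, +oo[ &, {homo F : x y / x < y}}.
Notation mu := (@lebesgue_measure R).
Notation G := (cumint F).

Lemma integrable_itv_F (a b : R) (s t : bool) :
  mu.-integrable [set` Interval (BSide s a) (BSide t b)] (EFin \o F).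
Proof.
have iab : mu.-integrable `[a, b] (EFin \o F).
  apply: continuous_compact_integrable; first exact: segment_compact.
  by move=> x; apply: continuous_subspaceT.
by apply: integrableS iab => //; apply: subset_itv; rewrite bnd_simp; case: s t.
Qed.

Lemma F_nondecr : {in `[0, +oo[ &, {homo F : x y / x <= y}}.
Proof.
move=> x y x0 y0; rewrite le_eqVlt => /predU1P[->//|xy].
exact/ltW/F_incr.
Qed.

Lemma cumintB {a b : R} : 0 <= a -> a <= b ->
  G b - G a = Rintegral mu `]a, b] F.
Proof.
by move=> a0 ab; apply: Rintegral_itvB; rewrite ?bnd_simp //; exact: integrable_itv_F.
Qed.

Lemma cumint_ge0 (x : R) : 0 <= G x.
Proof. by apply: Rintegral_ge0 => y _; exact: ltW. Qed.

Lemma cumint_le_mul {a : R} : 0 <= a -> G a <= a * F a.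
Proof.
move=> a0; have := @Rintegral_le_cst _ `[0, a] F (F a).
rewrite lebesgue_measure_itv_le //= subr0 mulrC; apply => //; first exact: ltry.
  exact: integrable_itv_F.
by move=> x /[!in_itv] /= /andP[x0 xa]; apply: F_nondecr; rewrite ?in_itv /= ?x0 ?a0.
Qed.

Lemma cumintB_ge {a b : R} : 0 <= a -> a <= b -> (b - a) * F a <= G b - G a.
Proof.
move=> a0 ab; rewrite cumintB // mulrC; have := @Rintegral_ge_cst _ `]a, b] F (F a).
rewrite lebesgue_measure_itv_le //=; apply => //; first exact: ltry.
  exact: integrable_itv_F.
move=> x /[!in_itv] /= /andP[ax xb]; have x0 : 0 <= x by rewrite (le_trans a0) ?ltW.
by apply: F_nondecr; rewrite ?in_itv /= ?andbT ?a0 ?x0 ?ltW.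
Qed.

Lemma cumintB_le {a b : R} : 0 <= a -> a <= b -> G b - G a <= (b - a) * F b.
Proof.
move=> a0 ab; rewrite cumintB // mulrC; have := @Rintegral_le_cst _ `]a, b] F (F b).
rewrite lebesgue_measure_itv_le //=; apply => //; first exact: ltry.
  exact: integrable_itv_F.
move=> x /[!in_itv] /= /andP[ax xb]; have x0 : 0 <= x by rewrite (le_trans a0) ?ltW.
by apply: F_nondecr; rewrite ?in_itv /= ?andbT ?x0 ?(le_trans x0).
Qed.

Lemma cumint_lt_mul {a : R} : 0 < a -> G a < a * F a.
Proof.
(* G a <= a/2 F (a/2) + a/2 F a < a F a. *)
move=> a0; have ha0 : 0 <= a / 2 by rewrite divr_ge0 ?ltW.
have haa : a / 2 <= a by rewrite ler_pdivrMr // ler_peMr ?ltW //; lra.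
have le_half := cumint_le_mul ha0.
have le_rest := cumintB_le ha0 haa.
have F_half : F (a / 2) < F a by apply: F_incr; rewrite ?in_itv /= ?ha0 ?ltW //; lra.
have : a / 2 * F (a / 2) < a / 2 * F a by rewrite ltr_pM2l ?divr_gt0.
have half_rest : a - a / 2 = a / 2 by rewrite {1}(splitr a) addrK.
rewrite half_rest in le_rest.
have : a * F a = a / 2 * F a + a / 2 * F a by rewrite -mulrDl -splitr.
lra.
Qed.

Lemma cumint_gt0 {a : R} : 0 < a -> 0 < G a.
Proof.
move=> a0; have := cumintB_ge (lexx 0) (ltW a0); rewrite cumint0 !subr0.
by apply: lt_le_trans; rewrite mulr_gt0.
Qed.

Lemma cumint_nondecreasing : nondecreasing_fun G.
Proof.
move=> x y xy; have [x0|x0] := ltP x 0.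
  rewrite {1}/cumint set_itv_ge ?bnd_simp -?ltNge // Rintegral_set0.
  exact: cumint_ge0.
rewrite -subr_ge0; apply: le_trans (cumintB_ge x0 xy).
by rewrite mulr_ge0 ?subr_ge0 ?(ltW (F_gt0 x)).
Qed.

Lemma cumint_lt_chord (x b : R) : 0 < x < b -> b * G x < x * G b.
Proof.
case/andP=> x0 xb; have G_lt := cumint_lt_mul x0.
have ge_rest := cumintB_ge (ltW x0) (ltW xb).
have : x * ((b - x) * F x) <= x * (G b - G x) by rewrite ler_wpM2l ?(ltW x0).
have : (b - x) * G x < (b - x) * (x * F x) by rewrite ltr_pM2l ?subr_gt0.
nra.
Qed.

Lemma cumint_weighted_lt (p : R -> R) :
  mu.-integrable `[0, 1] (EFin \o p) ->
  (forall x, x \in `[0, 1] -> 0 <= p x) -> Rintegral mu `[0, 1] p != 0 ->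
  Rintegral mu `[0, 1] (fun x => p x * G x) / G 1 <
  Rintegral mu `[0, 1] (fun x => x * p x).
Proof.
move=> ip p_ge0 p_neq0; have G1_gt0 := cumint_gt0 ltr01.
pose w x := x * G 1 - G x.
have G_le1 x : x \in `[0, 1] -> 0 <= G x <= G 1.
  by rewrite in_itv /= => /andP[_ x1]; rewrite cumint_ge0 cumint_nondecreasing.
have w_gt0 x : x \in `]0, 1[ -> 0 < w x.
  by rewrite in_itv /= => x01; rewrite subr_gt0 -[G x]mul1r cumint_lt_chord.
have w_ge0 x : x \in `[0, 1] -> 0 <= w x.
  rewrite in_itv /= => /andP[]; rewrite le_eqVlt => /predU1P[<- _|x0].
    by rewrite /w mul0r cumint0 subrr.
  rewrite le_eqVlt => /predU1P[->|x1]; first by rewrite /w mul1r subrr.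
  by rewrite ltW // w_gt0 // in_itv /= x0 x1.
have mG : measurable_fun (`[0, 1]%classic : set R) G.
  by apply: nondecreasing_measurable => //; exact: cumint_nondecreasing.
have bG : [bounded G x | x in `[0, 1]].
  apply: (bounded_in_le (G 1)) => x /G_le1 /andP[G0 G1].
  by rewrite ger0_norm.
have ipG := integrable_mul_bounded (measurable_itv _) ip mG bG.
have ipx : mu.-integrable `[0, 1] (EFin \o (fun x => p x * x)).
  apply: integrable_mul_bounded => //; apply: (bounded_in_le 1).
  by move=> x /andP[x0 x1]; rewrite ger0_norm.
rewrite ltr_pdivrMr // -subr_gt0.
have -> : Rintegral mu `[0, 1] (fun x => x * p x) =
          Rintegral mu `[0, 1] (fun x => p x * x).
  by apply: eq_Rintegral => x _; exact: mulrC.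
have ipxG := integrable_mul_bounded (measurable_itv _) ipx (measurable_cst (G 1))
  (bounded_cst _ _).
rewrite -RintegralZr // -RintegralB //.
rewrite (@eq_Rintegral _ _ _ mu _ (fun x => p x * w x)) => [|x _]; last by rewrite /w; ring.
apply: Rintegral_mul_gt0 => //.
- apply: measurable_funB => //; exact: measurable_funM.
- apply: (bounded_in_le (G 1)) => x x01.
  have /andP[G0 _] := G_le1 x x01.
  have : x \in `[0, 1] := x01; rewrite in_itv /= => /andP[_ x1].
  by rewrite ger0_norm ?w_ge0 // /w; nra.
Qed.

End cumint_increasing.

Section fixation_density.
Context {R : realType}.

Lemma Fth_theta_star (alpha beta theta : R) : beta - alpha != 0 ->
  Fth alpha beta theta (beta / (beta - alpha)) =
  fun y => expR ((theta - beta / (beta - alpha)) ^+ 2 * ((beta - alpha) / 2) * y ^+ 2).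
Proof.
move=> ba; apply: funext => y; rewrite /Fth.
have -> : beta / (beta - alpha) * alpha + (1 - beta / (beta - alpha)) * beta = 0.
  by field.
by congr expR; ring.
Qed.

Lemma continuous_expR_sqr (c : R) : continuous (fun y : R => expR (c * y ^+ 2)).
Proof.
move=> x; apply: (@continuous_comp _ _ _ (fun y : R => c * y ^+ 2) expR).
  apply: (@continuousM _ _ (fun=> c) (fun y : R => y ^+ 2)).
    exact: cst_continuous.
  exact: exprn_continuous.
exact: continuous_expR.
Qed.

Lemma expR_sqr_incr (c : R) : 0 < c ->
  {in `[0, +oo[ &, {homo (fun y : R => expR (c * y ^+ 2)) : x y / x < y}}.
Proof.
move=> c0 x y /[!in_itv] /= /andP[x0 _] /andP[y0 _] xy.
by rewrite ltr_expR ltr_pM2l // ltr_pXn2r // nnegrE.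
Qed.

End fixation_density.

Theorem mainTheorem6 (R : realType) (alpha beta theta : R) (p0 : R -> R) :
  alpha < 0 -> 0 < beta ->
  0 <= theta <= 1 ->
  theta != beta / (beta - alpha) ->
  (lebesgue_measure).-integrable `[0%R, 1%R] (EFin \o p0) ->
  (forall x, x \in `[0%R, 1%R] -> 0 <= p0 x) ->
  (\int[lebesgue_measure]_(x in `[0%R, 1%R]) (p0 x)%:E = 1%:E)%E ->
  pi1 alpha beta theta (beta / (beta - alpha)) p0 < pi1_neutral p0.
Proof.
move=> a0 b0 _ th_neq ip p_ge0 p1.
have ba_gt0 : 0 < beta - alpha by rewrite subr_gt0 (lt_trans a0).
set c := (theta - beta / (beta - alpha)) ^+ 2 * ((beta - alpha) / 2).
have c_gt0 : 0 < c.
  by rewrite mulr_gt0 ?divr_gt0 // lt_def sqr_ge0 sqrf_eq0 subr_eq0 th_neq.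
rewrite /pi1 /pi1_neutral Fth_theta_star ?gt_eqF // -/c.
apply: (cumint_weighted_lt _ (continuous_expR_sqr c) (fun y => expR_gt0 _)
  (expR_sqr_incr _ c_gt0)) => //.
by rewrite /Rintegral p1 oner_neq0.
Qed.
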